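(* Let $p>1$ and $q\ge p+1$, and let $f_{p,q}(t)=\sum_{j=1}^\infty j^{-p}\exp(i t j^q)$ for $t\in\mathbb{R}$. Then $f_{p,q}$, $\operatorname{Re}f_{p,q}$ and $\operatorname{Im}f_{p,q}$ are continuous on $\mathbb{R}$ but differentiable at no point. If moreover $q>p+1$, then none of them is Lipschitz continuous at any point of $\mathbb{R}$.
   Context: A function $g\colon\mathbb{R}\to\mathbb{C}$ is Lipschitz continuous at $t_0$ if there exist constants $L>0$, $\eta>0$ such that $|g(t)-g(t_0)|\le L|t-t_0|$ for all $t\in\,]t_0-\eta,t_0+\eta[$. *)

(* real analysis with Stdlib Reals.
   A complex-valued function g : R -> C is represented by its real and
   imaginary parts (gr, gi : R -> R). *)
From Stdlib Require Import Reals.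
Open Scope R_scope.

Definition cmod (a b : R) : R := sqrt (a * a + b * b).

(* the j-th term (j = n+1 >= 1) of f_{p,q}(t) = sum_j j^{-p} exp(i t j^q) *)
Definition term_re (p q t : R) (n : nat) : R :=
  Rpower (INR (S n)) (- p) * cos (t * Rpower (INR (S n)) q).
Definition term_im (p q t : R) (n : nat) : R :=
  Rpower (INR (S n)) (- p) * sin (t * Rpower (INR (S n)) q).

Definition ccontinuity_pt (gr gi : R -> R) (t0 : R) : Prop :=
  forall eps, 0 < eps -> exists delta, 0 < delta /\
    forall t, Rabs (t - t0) < delta -> cmod (gr t - gr t0) (gi t - gi t0) < eps.

Definition cderivable_pt (gr gi : R -> R) (t0 : R) : Prop :=
  exists lr li, forall eps, 0 < eps -> exists delta, 0 < delta /\
    forall h, h <> 0 -> Rabs h < delta ->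
      cmod ((gr (t0 + h) - gr t0) / h - lr) ((gi (t0 + h) - gi t0) / h - li) < eps.

Definition lipschitz_at (g : R -> R) (t0 : R) : Prop :=
  exists L eta, 0 < L /\ 0 < eta /\
    forall t, t0 - eta < t < t0 + eta -> Rabs (g t - g t0) <= L * Rabs (t - t0).

Definition clipschitz_at (gr gi : R -> R) (t0 : R) : Prop :=
  exists L eta, 0 < L /\ 0 < eta /\
    forall t, t0 - eta < t < t0 + eta ->
      cmod (gr t - gr t0) (gi t - gi t0) <= L * Rabs (t - t0).

From Stdlib Require Import Reals Lra Lia FunctionalExtensionality.
From Coquelicot Require Import Coquelicot.
Open Scope R_scope.

(* Both [Re f] and [Im f] have the form [g t = sum_j a_j cos (t l_j + th)] with
   [a_j = (j+1)^-p], [l_j = (j+1)^q]; the complex statements follow from the real part.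

   Averaging [k] times over windows of width [b] is a linear operator that multiplies the
   frequency [w] by a factor of size at most [(2/|w|)^k], and kills [cos (w s + c)] and
   [s cos (w s + c)] when [b] is a whole number of periods. Test the defect
   [g (t0 + s) - g t0 - l s] against [cos (l_n s + phase)] with [b_n = 2 pi K0 (n+1) / l_n]:
   the [n]-th term contributes [a_n b_n^k / 2], all other terms together at most
   [a_n b_n^k / 16] because the gaps [|l_j - l_n| >= (n+1)^(q-1) |j - n|] make their gains
   tiny, and the tail of the series at most [a_n b_n^k / 16]. A defect bounded by [E s] on
   [0, k b_n] therefore forces [E >= c (n+1)^(q-1-p)] for a fixed [c > 0]. Letting
   [n -> oo] excludes a derivative ([E] arbitrarily small) when [q >= p + 1] and a
   Lipschitz bound ([E] fixed) when [q > p + 1]. *)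

(** * Iterated averaging *)
Definition avg (b : R) (h : R -> R) (x : R) : R := RInt h x (x + b).
Definition avg_iter (b : R) (k : nat) (h : R -> R) : R -> R := Nat.iter k (avg b) h.

Lemma continuity_ex_RInt h a c : continuity h -> ex_RInt h a c.
Proof.
  intros Hh; apply (ex_RInt_continuous (V:=R_CompleteNormedModule)).
  intros z _; apply continuity_pt_filterlim, Hh.
Qed.

Lemma is_derive_avg b h x : continuity h -> is_derive (avg b h) x (h (x + b) - h x).
Proof.
  intros Hh.
  assert (Hprim : forall z, is_derive (RInt h 0) z (h z)).
  { intros z; apply (is_derive_RInt (V:=R_NormedModule) h (RInt h 0) 0).
    - apply filter_forall; intros y; apply (RInt_correct (V:=R_CompleteNormedModule)).
      apply continuity_ex_RInt, Hh.
    - apply continuity_pt_filterlim, Hh. }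
  apply is_derive_ext with (f := fun y => RInt h 0 (y + b) - RInt h 0 y).
  { intros y; unfold avg.
    rewrite <- (RInt_Chasles (V:=R_CompleteNormedModule) h 0 y (y + b))
      by apply continuity_ex_RInt, Hh.
    unfold plus; cbn; ring. }
  apply (is_derive_minus (fun y => RInt h 0 (y + b)) (RInt h 0)); [|apply Hprim].
  assert (Hshift : is_derive (fun y : R => y + b) x 1) by (auto_derive; auto; ring).
  rewrite <- (Rmult_1_l (h (x + b))).
  exact (is_derive_comp (RInt h 0) (fun y => y + b) x (h (x + b)) 1 (Hprim _) Hshift).
Qed.

Lemma continuity_avg b h : continuity h -> continuity (avg b h).
Proof.
  intros Hh x; apply continuity_pt_filterlim, (ex_derive_continuous (V:=R_NormedModule)).
  eexists; apply is_derive_avg, Hh.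
Qed.

Lemma avg_iter_S b k h : avg_iter b (S k) h = avg b (avg_iter b k h).
Proof. reflexivity. Qed.

Lemma avg_iter_Sr b k h : avg_iter b (S k) h = avg_iter b k (avg b h).
Proof. apply Nat.iter_succ_r. Qed.

Lemma continuity_avg_iter b k h : continuity h -> continuity (avg_iter b k h).
Proof. intros Hh; induction k as [|k IH]; [exact Hh | apply continuity_avg, IH]. Qed.

Lemma avg_plus b f g : continuity f -> continuity g ->
  avg b (fun y => f y + g y) = fun x => avg b f x + avg b g x.
Proof.
  intros Hf Hg; apply functional_extensionality; intros x.
  exact (RInt_plus (V:=R_CompleteNormedModule) f g x (x + b)
    (continuity_ex_RInt _ _ _ Hf) (continuity_ex_RInt _ _ _ Hg)).
Qed.

Lemma avg_scal b c f : continuity f -> avg b (fun y => c * f y) = fun x => c * avg b f x.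
Proof.
  intros Hf; apply functional_extensionality; intros x.
  exact (RInt_scal (V:=R_CompleteNormedModule) f x (x + b) c (continuity_ex_RInt _ _ _ Hf)).
Qed.

Lemma avg_iter_plus b k f g : continuity f -> continuity g ->
  avg_iter b k (fun y => f y + g y) = fun x => avg_iter b k f x + avg_iter b k g x.
Proof.
  intros Hf Hg; induction k as [|k IH]; [reflexivity|].
  rewrite !avg_iter_S, IH; apply avg_plus; apply continuity_avg_iter; assumption.
Qed.

Lemma avg_iter_scal b k c f : continuity f ->
  avg_iter b k (fun y => c * f y) = fun x => c * avg_iter b k f x.
Proof.
  intros Hf; induction k as [|k IH]; [reflexivity|].
  rewrite !avg_iter_S, IH; apply avg_scal, continuity_avg_iter, Hf.
Qed.

Lemma continuity_sum_f_R0 (F : nat -> R -> R) M : (forall j, continuity (F j)) ->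
  continuity (fun s => sum_f_R0 (fun j => F j s) M).
Proof.
  intros HF; induction M as [|M IH]; [apply HF|].
  apply (continuity_plus _ (F (S M))); auto.
Qed.

Lemma avg_iter_sum b k (F : nat -> R -> R) M x : (forall j, continuity (F j)) ->
  avg_iter b k (fun s => sum_f_R0 (fun j => F j s) M) x =
  sum_f_R0 (fun j => avg_iter b k (F j) x) M.
Proof.
  intros HF; induction M as [|M IH]; [reflexivity|].
  cbn [sum_f_R0].
  rewrite (avg_iter_plus b k (fun s => sum_f_R0 (fun j => F j s) M) (F (S M)));
    [rewrite IH; reflexivity | apply continuity_sum_f_R0, HF | apply HF].
Qed.

Lemma avg_iter_zero b k : avg_iter b k (fun _ => 0) = fun _ => 0.
Proof.
  induction k as [|k IH]; [reflexivity|].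
  rewrite !avg_iter_S, IH.
  apply functional_extensionality; intros x; unfold avg.
  rewrite RInt_const; unfold scal; cbn; unfold mult; cbn; ring.
Qed.

Lemma avg_iter_bound b k h x B : continuity h -> 0 <= b ->
  (forall y, x <= y <= x + INR k * b -> Rabs (h y) <= B) ->
  Rabs (avg_iter b k h x) <= B * b ^ k.
Proof.
  intros Hh Hb; revert x; induction k as [|k IH]; intros x HB.
  - rewrite Rmult_1_r; apply HB; cbn; lra.
  - rewrite !avg_iter_S; unfold avg.
    eapply Rle_trans.
    { apply (abs_RInt_le_const _ x (x + b) (B * b ^ k)); [lra| |].
      - apply continuity_ex_RInt, continuity_avg_iter, Hh.
      - intros t Ht; apply IH; intros y Hy; apply HB; rewrite S_INR; nra. }
    cbn; lra.
Qed.

Definition avg_gain (b w : R) : R :=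
  if Req_EM_T w 0 then b else 2 * sin (w * b / 2) / w.

Lemma avg_cos b w c :
  avg b (fun y => cos (w * y + c)) = fun x => avg_gain b w * cos (w * x + w * b / 2 + c).
Proof.
  apply functional_extensionality; intros x; unfold avg, avg_gain.
  destruct (Req_EM_T w 0) as [->|Hw].
  - rewrite (RInt_ext _ (fun _ => cos c)) by (intros; f_equal; ring).
    rewrite RInt_const; unfold scal; cbn; unfold mult; cbn.
    replace (0 * x + 0 * b / 2 + c) with c by field; ring.
  - assert (K : is_RInt (fun y => cos (w * y + c)) x (x + b)
                 (minus (sin (w * (x + b) + c) / w) (sin (w * x + c) / w))).
    { apply (is_RInt_derive (V:=R_CompleteNormedModule) (fun y => sin (w * y + c) / w)).
      - intros t _; auto_derive; auto; field; auto.
      - intros t _; apply continuity_pt_filterlim; reg. }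
    rewrite (is_RInt_unique _ _ _ _ K); unfold minus, plus, opp; cbn.
    set (m := w * x + w * b / 2 + c); set (d := w * b / 2).
    replace (w * (x + b) + c) with (m + d) by (unfold m, d; field).
    replace (w * x + c) with (m - d) by (unfold m, d; field).
    rewrite sin_plus, sin_minus; field; auto.
Qed.

Lemma avg_iter_cos b k w c : avg_iter b k (fun y => cos (w * y + c)) =
  fun x => avg_gain b w ^ k * cos (w * x + INR k * (w * b / 2) + c).
Proof.
  induction k as [|k IH].
  - apply functional_extensionality; intros x; cbn; rewrite Rmult_1_l; f_equal; ring.
  - rewrite !avg_iter_S, IH.
    replace (fun x => avg_gain b w ^ k * cos (w * x + INR k * (w * b / 2) + c))
      with (fun x => avg_gain b w ^ k * cos (w * x + (INR k * (w * b / 2) + c)))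
      by (apply functional_extensionality; intros; do 2 f_equal; ring).
    rewrite avg_scal, avg_cos by reg.
    apply functional_extensionality; intros x; rewrite S_INR; cbn.
    replace (w * x + w * b / 2 + (INR k * (w * b / 2) + c))
      with (w * x + (INR k + 1) * (w * b / 2) + c) by ring; ring.
Qed.

Lemma avg_gain_eq0 b w : w <> 0 -> sin (w * b / 2) = 0 -> avg_gain b w = 0.
Proof.
  intros Hw Hs; unfold avg_gain; destruct (Req_EM_T w 0); [contradiction|].
  rewrite Hs; field; auto.
Qed.

Lemma Rabs_avg_gain_le b w : w <> 0 -> Rabs (avg_gain b w) <= 2 / Rabs w.
Proof.
  intros Hw; unfold avg_gain; destruct (Req_EM_T w 0); [contradiction|].
  unfold Rdiv; rewrite !Rabs_mult, Rabs_inv, (Rabs_pos_eq 2) by lra.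
  assert (Rabs (sin (w * b * / 2)) <= 1) by (apply Rabs_le, SIN_bound).
  assert (0 < / Rabs w) by (apply Rinv_0_lt_compat, Rabs_pos_lt, Hw).
  pose proof (Rabs_pos (sin (w * b * / 2))); nra.
Qed.

Lemma avg_iter_cos_eq0 b k w c x : (1 <= k)%nat -> w <> 0 -> sin (w * b / 2) = 0 ->
  avg_iter b k (fun y => cos (w * y + c)) x = 0.
Proof.
  intros Hk Hw Hs; rewrite avg_iter_cos, avg_gain_eq0 by auto.
  destruct k; [lia|]; cbn; ring.
Qed.

Lemma avg_id_cos b w c : w <> 0 -> sin (w * b / 2) = 0 ->
  avg b (fun y => y * cos (w * y + c)) = fun x => b / w * cos (w * x + (c - PI / 2)).
Proof.
  intros Hw Hs.
  assert (Cb : cos (w * b) = 1).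
  { replace (w * b) with (2 * (w * b / 2)) by field; rewrite cos_2a_sin, Hs; ring. }
  assert (Sb : sin (w * b) = 0).
  { replace (w * b) with (2 * (w * b / 2)) by field; rewrite sin_2a, Hs; ring. }
  apply functional_extensionality; intros x; unfold avg.
  set (P := fun y => y * sin (w * y + c) / w + cos (w * y + c) / (w * w)).
  assert (K : is_RInt (fun y => y * cos (w * y + c)) x (x + b) (minus (P (x + b)) (P x))).
  { apply (is_RInt_derive (V:=R_CompleteNormedModule) P).
    - intros t _; unfold P; auto_derive; repeat split; auto; field; auto.
    - intros t _; apply continuity_pt_filterlim; reg. }
  rewrite (is_RInt_unique _ _ _ _ K); unfold minus, plus, opp, P; cbn.
  replace (w * (x + b) + c) with ((w * x + c) + w * b) by ring.
  replace (w * x + (c - PI / 2)) with ((w * x + c) - PI / 2) by ring.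
  generalize (w * x + c); intros z.
  rewrite sin_plus, cos_plus, Cb, Sb, cos_minus, cos_PI2, sin_PI2; field; auto.
Qed.

Lemma avg_iter_id_cos_eq0 b k w c x : (2 <= k)%nat -> w <> 0 -> sin (w * b / 2) = 0 ->
  avg_iter b k (fun y => y * cos (w * y + c)) x = 0.
Proof.
  intros Hk Hw Hs; destruct k as [|[|k]]; try lia.
  rewrite !avg_iter_Sr.
  rewrite avg_id_cos, avg_scal, avg_cos, avg_gain_eq0 by (auto; reg).
  replace (fun x => b / w * (0 * cos (w * x + w * b / 2 + (c - PI / 2)))) with (fun _ : R => 0)
    by (apply functional_extensionality; intros; ring).
  now rewrite avg_iter_zero.
Qed.
(** * Series dominated by a convergent series of constants *)

Section Dominated_series.

Variables (u : nat -> R -> R) (a : nat -> R) (A : R) (g : R -> R).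
Hypothesis u_le : forall j t, Rabs (u j t) <= a j.
Hypothesis a_sum : infinite_sum a A.
Hypothesis g_sum : forall t, infinite_sum (fun j => u j t) (g t).

Lemma dominated_partial_sum_le M : sum_f_R0 a M <= A.
Proof.
  apply (growing_ineq (sum_f_R0 a)); [|exact a_sum].
  intros n; cbn; pose proof (Rle_trans _ _ _ (Rabs_pos (u (S n) 0)) (u_le (S n) 0)); lra.
Qed.

Lemma dominated_tail_le t M d :
  Rabs (sum_f_R0 (fun j => u j t) (M + d) - sum_f_R0 (fun j => u j t) M)
  <= sum_f_R0 a (M + d) - sum_f_R0 a M.
Proof.
  induction d as [|d IH].
  - rewrite Nat.add_0_r, !Rminus_diag, Rabs_R0; lra.
  - rewrite Nat.add_succ_r; cbn [sum_f_R0].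
    pose proof (u_le (S (M + d)) t).
    match goal with |- Rabs (?x + ?y - ?z) <= _ =>
      replace (x + y - z) with ((x - z) + y) by ring; pose proof (Rabs_triang (x - z) y) end.
    lra.
Qed.

Lemma dominated_remainder_le t M :
  Rabs (g t - sum_f_R0 (fun j => u j t) M) <= A - sum_f_R0 a M.
Proof.
  apply Rnot_lt_le; intros Hlt.
  set (e := Rabs (g t - sum_f_R0 (fun j => u j t) M) - (A - sum_f_R0 a M)).
  destruct (g_sum t e ltac:(unfold e; lra)) as [N HN].
  specialize (HN (M + N)%nat ltac:(lia)); unfold Rdist in HN.
  pose proof (dominated_tail_le t M N); pose proof (dominated_partial_sum_le (M + N)).
  assert (Rabs (g t - sum_f_R0 (fun j => u j t) M) <=
          Rabs (sum_f_R0 (fun j => u j t) (M + N) - g t) +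
          Rabs (sum_f_R0 (fun j => u j t) (M + N) - sum_f_R0 (fun j => u j t) M)).
  { rewrite <- (Rabs_Ropp (_ - g t)); eapply Rle_trans; [|apply Rabs_triang].
    right; f_equal; ring. }
  unfold e in HN; lra.
Qed.

Lemma dominated_remainder_small e : 0 < e ->
  exists M0, forall M, (M0 <= M)%nat -> A - sum_f_R0 a M < e.
Proof.
  intros He; destruct (a_sum e He) as [N HN]; exists N; intros M HM.
  specialize (HN M HM); unfold Rdist in HN; pose proof (dominated_partial_sum_le M).
  rewrite Rabs_left1 in HN by lra; lra.
Qed.

Lemma continuity_dominated_sum : (forall j, continuity (u j)) -> continuity g.
Proof.
  intros Hu t0 e He.
  destruct (dominated_remainder_small (e / 3) ltac:(lra)) as [M HM].
  specialize (HM M (le_n _)).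
  assert (HS : continuity (fun t => sum_f_R0 (fun j => u j t) M))
    by apply (continuity_sum_f_R0 u), Hu.
  destruct (HS t0 (e / 3) ltac:(lra)) as [d [Hd K]].
  exists d; split; [exact Hd|]; intros y [_ Hy].
  destruct (Req_dec y t0) as [->|Hne]; [cbn; unfold R_dist; rewrite Rminus_diag, Rabs_R0; lra|].
  specialize (K y (conj (conj I (not_eq_sym Hne)) Hy)); cbn in K |- *.
  pose proof (dominated_remainder_le y M) as Ry; pose proof (dominated_remainder_le t0 M) as R0.
  set (Sy := sum_f_R0 (fun j => u j y) M) in *; set (S0 := sum_f_R0 (fun j => u j t0) M) in *.
  pose proof (R_dist_tri (g y) (g t0) Sy); pose proof (R_dist_tri Sy (g t0) S0).
  unfold R_dist in *; rewrite Rabs_minus_sym in R0; lra.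
Qed.

End Dominated_series.

(** * Frequencies and amplitudes *)

Definition freq (q : R) (j : nat) : R := Rpower (INR (S j)) q.
Definition amp (p : R) (j : nat) : R := Rpower (INR (S j)) (- p).
Definition wave (p q th t : R) (j : nat) : R := amp p j * cos (t * freq q j + th).

Lemma Rpower_pos x y : 0 < Rpower x y.
Proof. apply exp_pos. Qed.

Lemma Rpower_succ x y : 0 < x -> Rpower x (y + 1) = Rpower x y * x.
Proof. intros Hx; rewrite Rpower_plus, Rpower_1 by exact Hx; reflexivity. Qed.

Lemma INR_S_ge1 j : 1 <= INR (S j).
Proof. apply (le_INR 1); lia. Qed.

Lemma Rabs_INR_sub_ge1 j n : j <> n -> 1 <= Rabs (INR j - INR n).
Proof.
  intros Hjn; destruct (Nat.lt_gt_cases j n) as [[Hlt|Hgt] _]; auto.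
  - apply le_INR in Hlt; rewrite S_INR in Hlt.
    rewrite Rabs_left1; lra.
  - apply le_INR in Hgt; rewrite S_INR in Hgt.
    rewrite Rabs_pos_eq; lra.
Qed.

Lemma amp_pos p j : 0 < amp p j.
Proof. apply Rpower_pos. Qed.

Lemma freq_pos q j : 0 < freq q j.
Proof. apply Rpower_pos. Qed.

Lemma Rabs_wave_le p q th t j : Rabs (wave p q th t j) <= amp p j.
Proof.
  unfold wave; rewrite Rabs_mult, (Rabs_pos_eq (amp p j)) by (left; apply amp_pos).
  assert (Rabs (cos (t * freq q j + th)) <= 1) by apply Rabs_le, COS_bound.
  pose proof (amp_pos p j); nra.
Qed.

Lemma continuity_wave p q th j : continuity (fun t => wave p q th t j).
Proof. unfold wave; reg. Qed.

(* The larger of the two bases controls the difference of powers, hence either base does. *)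
Lemma Rpower_sub_ge x y q : 1 <= q -> 0 < x -> 0 < y ->
  Rpower y (q - 1) * Rabs (x - y) <= Rabs (Rpower x q - Rpower y q).
Proof.
  intros Hq Hx Hy.
  replace q with ((q - 1) + 1) at 2 3 by ring.
  rewrite !Rpower_succ by assumption.
  pose proof (Rpower_pos y (q - 1)); pose proof (Rpower_pos x (q - 1)).
  destruct (Rle_lt_dec y x) as [Hyx|Hxy].
  - assert (Rpower y (q - 1) <= Rpower x (q - 1)) by (apply Rle_Rpower_l; lra).
    rewrite !Rabs_pos_eq by nra; nra.
  - assert (Rpower x (q - 1) <= Rpower y (q - 1)) by (apply Rle_Rpower_l; lra).
    rewrite !Rabs_left1 by nra; nra.
Qed.

Lemma freq_gap q n j : 1 <= q ->
  Rpower (INR (S n)) (q - 1) * Rabs (INR j - INR n) <= Rabs (freq q j - freq q n).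
Proof.
  intros Hq; unfold freq.
  replace (INR j - INR n) with (INR (S j) - INR (S n)) by (rewrite !S_INR; ring).
  apply Rpower_sub_ge; [exact Hq | apply (lt_INR 0); lia | apply (lt_INR 0); lia].
Qed.

Lemma amp_ratio p n j (k : nat) : 0 < p -> p <= INR k -> j <> n ->
  amp p j <= Rpower 2 p * amp p n * Rabs (INR j - INR n) ^ k.
Proof.
  intros Hp Hk Hjn; unfold amp; rewrite !Rpower_Ropp.
  pose proof (Rabs_INR_sub_ge1 j n Hjn) as Hd.
  set (d := Rabs (INR j - INR n)) in *.
  pose proof (INR_S_ge1 j) as Hj; pose proof (INR_S_ge1 n) as Hn.
  assert (Hnj : INR (S n) <= 2 * d * INR (S j)).
  { assert (INR n - INR j <= d) by (unfold d; rewrite Rabs_minus_sym; apply Rle_abs).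
    rewrite !S_INR in *; nra. }
  assert (K1 : Rpower (INR (S n)) p <= Rpower 2 p * Rpower d p * Rpower (INR (S j)) p).
  { rewrite !Rpower_mult_distr by lra; apply Rle_Rpower_l; lra. }
  assert (K2 : Rpower d p <= d ^ k) by (rewrite <- Rpower_pow by lra; apply Rle_Rpower; lra).
  pose proof (Rpower_pos (INR (S n)) p); pose proof (Rpower_pos (INR (S j)) p).
  pose proof (Rpower_pos 2 p); pose proof (Rpower_pos d p).
  apply (Rmult_le_reg_r (Rpower (INR (S n)) p * Rpower (INR (S j)) p)); [nra|].
  replace (/ Rpower (INR (S j)) p * (Rpower (INR (S n)) p * Rpower (INR (S j)) p))
    with (Rpower (INR (S n)) p) by (field; lra).
  replace (Rpower 2 p * / Rpower (INR (S n)) p * d ^ k * (Rpower (INR (S n)) p * Rpower (INR (S j)) p))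
    with (Rpower 2 p * d ^ k * Rpower (INR (S j)) p) by (field; lra).
  nra.
Qed.

Definition dist_weight (n j : nat) : R := if Nat.eq_dec j n then 0 else / (INR j - INR n) ^ 2.

(* Telescoping invariant: [1/d^2 <= 2/(d-1) - 2/d] and [1/d^2 <= 2/d - 2/(d+1)]. *)
Lemma sum_dist_weight_aux n M :
  ((M < n)%nat -> sum_f_R0 (dist_weight n) M <= 2 / (INR n - INR M)) /\
  ((n <= M)%nat -> sum_f_R0 (dist_weight n) M <= 4 - 2 / (INR M - INR n + 1)).
Proof.
  induction M as [|M [IH1 IH2]].
  - simpl. unfold dist_weight. destruct (Nat.eq_dec 0 n) as [<-|Hn]; split; intros H; try lia.
    + simpl. lra.
    + assert (1 <= INR n) by (apply (le_INR 1); lia). simpl.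
      replace (/ ((0 - INR n) * ((0 - INR n) * 1))) with (/ (INR n * INR n)) by (f_equal; ring).
      apply (Rmult_le_reg_r (INR n * INR n)). nra. field_simplify; nra.
  - change (sum_f_R0 (dist_weight n) (S M)) with (sum_f_R0 (dist_weight n) M + dist_weight n (S M)).
    assert (Ew : dist_weight n (S M) = if Nat.eq_dec (S M) n then 0 else / (INR (S M) - INR n)^2) by reflexivity.
    rewrite Ew; clear Ew. rewrite !S_INR. destruct (Nat.eq_dec (S M) n) as [Hn|Hn].
    + split; intros H; [lia|]. subst n. rewrite Rplus_0_r.
      assert (K := IH1 (Nat.lt_succ_diag_r M)). rewrite S_INR in *.
      replace (INR M + 1 - (INR M + 1) + 1) with 1 by ring.
      replace (INR M + 1 - INR M) with 1 in K by ring. lra.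
    + split; intros H.
      * assert (K := IH1 ltac:(lia)).
        assert (Hd : INR M + 2 <= INR n) by (replace 2 with (INR 2) by reflexivity; rewrite <- plus_INR; apply le_INR; lia).
        set (x := INR n - INR M) in *.
        replace (INR M + 1 - INR n) with (- (x - 1)) by (unfold x; ring).
        replace (INR n - (INR M + 1)) with (x - 1) by (unfold x; ring).
        assert (2 <= x) by (unfold x; lra). clearbody x.
        replace ((- (x - 1)) ^ 2) with ((x-1)^2) by ring.
        apply Rle_trans with (2 / x + / (x - 1) ^ 2). lra.
        apply (Rmult_le_reg_r (x * (x-1)^2)). nra.
        field_simplify; try lra; nra.
      * assert (K := IH2 ltac:(lia)).
        assert (Hd : INR n <= INR M) by (apply le_INR; lia).
        set (x := INR M - INR n + 1) in *.
        replace (INR M + 1 - INR n) with x by (unfold x; ring).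
        replace (INR M + 1 - INR n + 1) with (x + 1) by (unfold x; ring).
        assert (1 <= x) by (unfold x; lra). clearbody x.
        apply Rle_trans with (4 - 2 / x + / x ^ 2). lra.
        apply (Rmult_le_reg_r (x^2 * (x+1))). nra.
        field_simplify; try lra; nra.
Qed.

Lemma sum_dist_weight_le n M : sum_f_R0 (dist_weight n) M <= 4.
Proof.
  destruct (Nat.lt_ge_cases M n) as [H|H].
  - pose proof (proj1 (sum_dist_weight_aux n M) H).
    assert (INR M + 1 <= INR n) by (rewrite <- S_INR; apply le_INR; lia).
    apply Rle_trans with (2 / (INR n - INR M)); auto.
    apply (Rmult_le_reg_r (INR n - INR M)). lra. field_simplify; lra.
  - pose proof (proj2 (sum_dist_weight_aux n M) H).
    assert (INR n <= INR M) by (apply le_INR; lia).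
    assert (0 < 2 / (INR M - INR n + 1)) by (apply Rdiv_lt_0_compat; lra). lra.
Qed.

Lemma sum_f_R0_indicator n M c :
  sum_f_R0 (fun j => if Nat.eq_dec j n then c else 0) M = if Nat.leb n M then c else 0.
Proof.
  induction M as [|M IH]; cbn [sum_f_R0].
  - destruct (Nat.eq_dec 0 n), (Nat.leb n 0) eqn:E; auto;
      apply Nat.leb_le in E || apply Nat.leb_gt in E; lia.
  - rewrite IH; destruct (Nat.eq_dec (S M) n), (Nat.leb n M) eqn:E1, (Nat.leb n (S M)) eqn:E2;
      try ring; apply Nat.leb_le in E1 || apply Nat.leb_gt in E1;
      apply Nat.leb_le in E2 || apply Nat.leb_gt in E2; lia.
Qed.

(** * The lacunary test *)

Lemma PI_gt3 : 3 < PI.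
Proof. pose proof PI2_3_2; lra. Qed.

(* The arithmetic behind the off-diagonal estimate: the gain [(B/(K d))^(k'+2)] beats the
   polynomial growth [d^k'] of the amplitude ratio and leaves [1/d^2] to be summed. *)
Lemma off_diagonal_arith (a an B K d P : R) (k' : nat) : 0 < an -> 0 <= a -> 1 <= d -> 0 < B ->
  64 * P <= K -> 1 <= P -> a <= P * an * d ^ k' ->
  a * (B / (K * d)) ^ (k' + 2) <= B ^ (k' + 2) * an * / d ^ 2 / 64.
Proof.
  intros Han Ha Hd HB HK HP Ha2.
  assert (Kk : K <= K ^ (k' + 2)) by (rewrite <- (pow_1 K) at 1; apply Rle_pow; [lra|lia]).
  assert (Hdk : 0 < d ^ k') by (apply pow_lt; lra).
  assert (Hd2 : 0 < d ^ 2) by (apply pow_lt; lra).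
  assert (HBk : 0 < B ^ (k' + 2)) by (apply pow_lt; lra).
  assert (E : (B / (K * d)) ^ (k' + 2) = B ^ (k' + 2) / (K ^ (k' + 2) * (d ^ k' * d ^ 2))).
  { unfold Rdiv; rewrite Rpow_mult_distr, pow_inv, Rpow_mult_distr, (pow_add d); reflexivity. }
  rewrite E.
  assert (a * 64 <= K ^ (k' + 2) * d ^ k' * an) by nra.
  apply (Rmult_le_reg_r (64 * K ^ (k' + 2) * d ^ k' * d ^ 2 / B ^ (k' + 2))).
  { apply Rdiv_lt_0_compat; [repeat apply Rmult_lt_0_compat|]; lra. }
  field_simplify; try (split; try lra; apply pow_nonzero; lra).
  nra.
Qed.

Section Lacunary_test.

Variables (p q th A : R) (g : R -> R) (k K0 : nat).
Hypothesis hp : 1 < p.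
Hypothesis hq : p + 1 <= q.
Hypothesis hk : p + 2 <= INR k.
Hypothesis hK0 : 64 * Rpower 2 p <= INR K0.
Hypothesis hA : infinite_sum (amp p) A.
Hypothesis hg : forall t, infinite_sum (wave p q th t) (g t).

(* [freq q n * width n / 2 = K0 (n+1) PI]: the window holds whole periods of the [n]-th term. *)
Definition width (n : nat) : R := 2 * PI * INR K0 * INR (S n) / freq q n.
Definition phase (t0 : R) (j : nat) : R := freq q j * t0 + th.
Definition probe (t0 : R) (n : nat) (s : R) : R := cos (freq q n * s + phase t0 n).
Definition coupling (t0 : R) (n j : nat) : R :=
  avg_iter (width n) k (fun s => cos (freq q j * s + phase t0 j) * probe t0 n s) 0.

Lemma K0_ge1 : 1 <= INR K0.
Proof.
  assert (1 <= Rpower 2 p) by (rewrite <- (Rpower_O 2) by lra; apply Rle_Rpower; lra); lra.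
Qed.

Lemma k_ge2 : (2 <= k)%nat.
Proof.
  destruct (Nat.le_gt_cases 2 k) as [H|H]; auto.
  assert (INR k <= 1) by (apply (le_INR k 1); lia); lra.
Qed.

Lemma width_pos n : 0 < width n.
Proof.
  pose proof K0_ge1; pose proof PI_gt3; pose proof (INR_S_ge1 n); pose proof (freq_pos q n).
  assert (0 < 2 * PI * INR K0) by nra.
  unfold width; apply Rdiv_lt_0_compat; nra.
Qed.

Lemma sin_freq_width m n : sin (INR m * freq q n * width n / 2) = 0.
Proof.
  apply sin_eq_0_1; exists (Z.of_nat (m * K0 * S n)).
  rewrite <- INR_IZR_INZ, !mult_INR; unfold width; pose proof (freq_pos q n); field; lra.
Qed.

Lemma width_freq_gap n : width n * Rpower (INR (S n)) (q - 1) = 2 * PI * INR K0.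
Proof.
  unfold width, freq; pose proof (INR_S_ge1 n).
  replace q with ((q - 1) + 1) at 1 by ring; rewrite Rpower_succ by lra.
  pose proof (Rpower_pos (INR (S n)) (q - 1)); field; lra.
Qed.

Lemma coupling_eq t0 n j : coupling t0 n j =
  / 2 * (avg_gain (width n) (freq q j - freq q n) ^ k *
         cos (INR k * ((freq q j - freq q n) * width n / 2) + (phase t0 j - phase t0 n))) +
  / 2 * (avg_gain (width n) (freq q j + freq q n) ^ k *
         cos (INR k * ((freq q j + freq q n) * width n / 2) + (phase t0 j + phase t0 n))).
Proof.
  unfold coupling, probe.
  set (w1 := freq q j - freq q n); set (w2 := freq q j + freq q n).
  set (c1 := phase t0 j - phase t0 n); set (c2 := phase t0 j + phase t0 n).
  replace (fun s => cos (freq q j * s + phase t0 j) * cos (freq q n * s + phase t0 n))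
    with (fun s => / 2 * cos (w1 * s + c1) + / 2 * cos (w2 * s + c2)).
  2: { apply functional_extensionality; intros s; unfold w1, w2, c1, c2.
       replace ((freq q j - freq q n) * s + (phase t0 j - phase t0 n))
         with ((freq q j * s + phase t0 j) - (freq q n * s + phase t0 n)) by ring.
       replace ((freq q j + freq q n) * s + (phase t0 j + phase t0 n))
         with ((freq q j * s + phase t0 j) + (freq q n * s + phase t0 n)) by ring.
       generalize (freq q j * s + phase t0 j) (freq q n * s + phase t0 n); intros u v.
       rewrite cos_minus, cos_plus; field. }
  rewrite avg_iter_plus, !avg_iter_scal, !avg_iter_cos by reg.
  rewrite !Rmult_0_r, !Rplus_0_l; reflexivity.
Qed.

Lemma coupling_diag t0 n : coupling t0 n n = width n ^ k / 2.
Proof.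
  rewrite coupling_eq, (avg_gain_eq0 _ (freq q n + freq q n)).
  - unfold avg_gain; rewrite Rminus_diag; destruct (Req_EM_T 0 0) as [_|]; [|lra].
    replace (INR k * (0 * width n / 2) + (phase t0 n - phase t0 n)) with 0 by field.
    rewrite cos_0, pow_i by (pose proof k_ge2; lia); field.
  - pose proof (freq_pos q n); intro; lra.
  - rewrite <- (sin_freq_width 2 n); f_equal; cbn; field.
Qed.

Lemma Rabs_avg_gain_width_le n j w : j <> n -> Rabs (freq q j - freq q n) <= Rabs w ->
  Rabs (avg_gain (width n) w) <= width n / (INR K0 * Rabs (INR j - INR n)).
Proof.
  intros Hjn Hw.
  pose proof (Rabs_INR_sub_ge1 j n Hjn) as Hd.
  pose proof (freq_gap q n j ltac:(lra)) as Hgap.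
  set (d := Rabs (INR j - INR n)) in *.
  set (G := Rpower (INR (S n)) (q - 1) * d) in *.
  assert (HG : 0 < G) by (pose proof (Rpower_pos (INR (S n)) (q - 1)); unfold G; nra).
  assert (Hw0 : w <> 0) by (intros ->; rewrite Rabs_R0 in Hw; lra).
  eapply Rle_trans; [apply Rabs_avg_gain_le, Hw0|].
  apply Rle_trans with (2 / G).
  { unfold Rdiv; apply Rmult_le_compat_l; [lra|apply Rinv_le_contravar; lra]. }
  pose proof (width_freq_gap n); pose proof PI_gt3; pose proof K0_ge1; pose proof (width_pos n).
  apply (Rmult_le_reg_r (G * INR K0)); [nra|].
  unfold G; field_simplify; [|lra|nra].
  replace (Rpower (INR (S n)) (q - 1) * width n) with (2 * PI * INR K0) by lra; nra.
Qed.

Lemma Rabs_half_sum_cos_le a b x y B : Rabs a <= B -> Rabs b <= B ->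
  Rabs (/ 2 * (a * cos x) + / 2 * (b * cos y)) <= B.
Proof.
  intros Ha Hb.
  assert (Rabs (cos x) <= 1) by apply Rabs_le, COS_bound.
  assert (Rabs (cos y) <= 1) by apply Rabs_le, COS_bound.
  eapply Rle_trans; [apply Rabs_triang|].
  rewrite !Rabs_mult, Rabs_inv, (Rabs_pos_eq 2) by lra.
  pose proof (Rabs_pos (cos x)); pose proof (Rabs_pos (cos y)).
  pose proof (Rabs_pos a); pose proof (Rabs_pos b); nra.
Qed.

Lemma coupling_off_diag t0 n j : j <> n ->
  amp p j * Rabs (coupling t0 n j) <= width n ^ k * amp p n * dist_weight n j / 64.
Proof.
  intros Hjn.
  pose proof (Rabs_INR_sub_ge1 j n Hjn) as Hd.
  assert (Hw : dist_weight n j = / Rabs (INR j - INR n) ^ 2).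
  { unfold dist_weight; destruct (Nat.eq_dec j n); [contradiction|].
    rewrite <- !Rsqr_pow2, <- Rsqr_abs; reflexivity. }
  set (d := Rabs (INR j - INR n)) in *.
  set (X := width n / (INR K0 * d)).
  pose proof (width_pos n); pose proof K0_ge1.
  assert (HX : 0 <= X) by (unfold X; apply Rlt_le, Rdiv_lt_0_compat; nra).
  assert (Hgain : forall w, Rabs (freq q j - freq q n) <= Rabs w ->
                    Rabs (avg_gain (width n) w ^ k) <= X ^ k).
  { intros w Hw'; rewrite <- RPow_abs; apply pow_incr; split; [apply Rabs_pos|].
    apply Rabs_avg_gain_width_le; auto. }
  assert (HT : Rabs (coupling t0 n j) <= X ^ k).
  { rewrite coupling_eq; apply Rabs_half_sum_cos_le; apply Hgain; [lra|].
    pose proof (freq_pos q j); pose proof (freq_pos q n).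
    rewrite (Rabs_pos_eq (_ + _)) by lra; apply Rabs_le; lra. }
  pose proof (amp_pos p j); pose proof (amp_pos p n).
  destruct (Nat.le_exists_sub 2 k k_ge2) as [k' [Ek _]].
  assert (Hk' : p <= INR k') by (rewrite Ek, plus_INR in hk; cbn in hk; lra).
  apply Rle_trans with (amp p j * X ^ k); [apply Rmult_le_compat_l; lra|].
  rewrite Hw, Ek; unfold X.
  apply off_diagonal_arith with (P := Rpower 2 p); auto; try lra.
  - rewrite <- (Rpower_O 2) by lra; apply Rle_Rpower; lra.
  - apply amp_ratio; auto; lra.
Qed.

Lemma sum_coupling_near_diag t0 n M : (n <= M)%nat ->
  Rabs (sum_f_R0 (fun j => amp p j * coupling t0 n j) M - amp p n * (width n ^ k / 2))
  <= width n ^ k * amp p n / 16.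
Proof.
  intros HM.
  set (diag := fun j => if Nat.eq_dec j n then amp p n * (width n ^ k / 2) else 0).
  assert (Hdiag : sum_f_R0 diag M = amp p n * (width n ^ k / 2)).
  { unfold diag; rewrite sum_f_R0_indicator; apply Nat.leb_le in HM; rewrite HM; reflexivity. }
  rewrite <- Hdiag, <- minus_sum.
  eapply Rle_trans; [apply sum_f_R0_triangle|].
  apply Rle_trans with (sum_f_R0 (fun j => dist_weight n j * (width n ^ k * amp p n / 64)) M).
  { apply sum_Rle; intros j _; unfold diag.
    destruct (Nat.eq_dec j n) as [->|Hjn].
    - rewrite coupling_diag, Rminus_diag, Rabs_R0.
      unfold dist_weight; destruct (Nat.eq_dec n n); [lra|contradiction].
    - rewrite Rminus_0_r, Rabs_mult, (Rabs_pos_eq (amp p j)) by (left; apply amp_pos).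
      eapply Rle_trans; [apply coupling_off_diag; auto|]; right; field. }
  rewrite <- scal_sum.
  pose proof (sum_dist_weight_le n M); pose proof (width_pos n); pose proof (amp_pos p n).
  assert (0 < width n ^ k) by (apply pow_lt; lra).
  assert (0 < width n ^ k * amp p n / 64) by (apply Rdiv_lt_0_compat; nra).
  nra.
Qed.

Lemma sin_half_freq_width n : sin (freq q n * width n / 2) = 0.
Proof. rewrite <- (sin_freq_width 1 n); f_equal; cbn; field. Qed.

Lemma continuity_wave_sum : continuity g.
Proof.
  apply (continuity_dominated_sum (fun j t => wave p q th t j) (amp p) A g).
  - intros; apply Rabs_wave_le.
  - exact hA.
  - exact hg.
  - intros; apply continuity_wave.
Qed.

Definition series_rest (M : nat) (t : R) : R := g t - sum_f_R0 (wave p q th t) M.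

Lemma Rabs_series_rest_le M t : Rabs (series_rest M t) <= A - sum_f_R0 (amp p) M.
Proof.
  exact (dominated_remainder_le (fun j t => wave p q th t j) (amp p) A g
           (fun j t => Rabs_wave_le p q th t j) hA hg t M).
Qed.

Lemma continuity_series_rest_shift M t0 : continuity (fun s => series_rest M (t0 + s)).
Proof.
  apply (continuity_minus (fun s => g (t0 + s))).
  - apply (continuity_comp (fun s => t0 + s) g); [reg|apply continuity_wave_sum].
  - apply (continuity_sum_f_R0 (fun j s => wave p q th (t0 + s) j)); intros j; unfold wave; reg.
Qed.

(* Averaging kills the constant and linear parts of the defect, which are [probe] and
   [s * probe] up to scalars; the partial sum of the series produces the couplings. *)
Lemma avg_iter_defect_eq t0 n l M :
  avg_iter (width n) k (fun s => (g (t0 + s) - g t0 - l * s) * probe t0 n s) 0 =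
  sum_f_R0 (fun j => amp p j * coupling t0 n j) M +
  avg_iter (width n) k (fun s => series_rest M (t0 + s) * probe t0 n s) 0.
Proof.
  set (P := probe t0 n).
  set (F := fun s => sum_f_R0 (fun j => amp p j * (cos (freq q j * s + phase t0 j) * P s)) M).
  set (Rest := fun s => series_rest M (t0 + s) * P s).
  assert (Hdec : (fun s => (g (t0 + s) - g t0 - l * s) * P s) =
                 fun s => F s + (- g t0) * P s + (- l) * (s * P s) + Rest s).
  { apply functional_extensionality; intros s; unfold F, Rest, series_rest.
    rewrite (sum_eq _ (fun j => wave p q th (t0 + s) j * P s)), <- scal_sum; [ring|].
    intros j _; unfold wave, phase.
    replace ((t0 + s) * freq q j + th) with (freq q j * s + (freq q j * t0 + th)) by ring; ring. }
  assert (HP : continuity P) by (unfold P, probe; reg).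
  assert (HF : continuity F).
  { apply (continuity_sum_f_R0 (fun j s => amp p j * (cos (freq q j * s + phase t0 j) * P s))).
    intros j; reg. }
  assert (HR : continuity Rest)
    by (apply (continuity_mult (fun s => series_rest M (t0 + s)) P);
        [apply continuity_series_rest_shift | exact HP]).
  rewrite Hdec, !avg_iter_plus by reg.
  rewrite (avg_iter_scal _ _ (- g t0)), (avg_iter_scal _ _ (- l)) by (unfold P, probe; reg).
  unfold P, probe.
  rewrite avg_iter_cos_eq0, avg_iter_id_cos_eq0; try apply sin_half_freq_width;
    try (pose proof k_ge2; lia); try (pose proof (freq_pos q n); intro; lra).
  unfold F; rewrite avg_iter_sum by (intros; reg).
  rewrite Rmult_0_r, Rmult_0_r, !Rplus_0_r; f_equal.
  apply sum_eq; intros j _; rewrite avg_iter_scal by reg; reflexivity.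
Qed.

Lemma avg_iter_rest_le t0 n M :
  Rabs (avg_iter (width n) k (fun s => series_rest M (t0 + s) * probe t0 n s) 0)
  <= (A - sum_f_R0 (amp p) M) * width n ^ k.
Proof.
  apply avg_iter_bound; [|left; apply width_pos|].
  - apply (continuity_mult (fun s => series_rest M (t0 + s))); [|unfold probe; reg].
    apply continuity_series_rest_shift.
  - intros y _; rewrite Rabs_mult.
    assert (Rabs (probe t0 n y) <= 1) by apply Rabs_le, COS_bound.
    pose proof (Rabs_series_rest_le M (t0 + y)).
    pose proof (Rabs_pos (series_rest M (t0 + y))); pose proof (Rabs_pos (probe t0 n y)); nra.
Qed.

(* [3/8 = 1/2 - 1/16 - 1/16]: diagonal coupling, minus the off-diagonal couplings, minus the
   tail of the series. *)
Lemma lacunary_test n t0 l E : 0 <= E ->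
  (forall s, 0 <= s <= INR k * width n -> Rabs (g (t0 + s) - g t0 - l * s) <= E * s) ->
  3 / 8 * amp p n <= E * (INR k * width n).
Proof.
  intros HE Hdef.
  pose proof (width_pos n) as Hb; pose proof (amp_pos p n) as Han.
  assert (Hbk : 0 < width n ^ k) by (apply pow_lt; lra).
  destruct (dominated_remainder_small (fun j t => wave p q th t j) (amp p) A
              (fun j t => Rabs_wave_le p q th t j) hA (amp p n / 16) ltac:(lra)) as [M0 HM0].
  set (M := Nat.max n M0).
  assert (Hrest : A - sum_f_R0 (amp p) M < amp p n / 16) by (apply HM0; lia).
  assert (Hrest0 : 0 <= A - sum_f_R0 (amp p) M)
    by (eapply Rle_trans; [apply Rabs_pos|apply (Rabs_series_rest_le M t0)]).
  assert (Hdefect : Rabs (avg_iter (width n) k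
             (fun s => (g (t0 + s) - g t0 - l * s) * probe t0 n s) 0)
           <= E * (INR k * width n) * width n ^ k).
  { pose proof continuity_wave_sum.
    apply avg_iter_bound; [unfold probe; reg | lra |].
    intros y Hy; rewrite Rplus_0_l in Hy; rewrite Rabs_mult.
    assert (Rabs (probe t0 n y) <= 1) by apply Rabs_le, COS_bound.
    specialize (Hdef y Hy).
    pose proof (Rabs_pos (g (t0 + y) - g t0 - l * y)); pose proof (Rabs_pos (probe t0 n y)); nra. }
  rewrite (avg_iter_defect_eq t0 n l M) in Hdefect.
  pose proof (sum_coupling_near_diag t0 n M ltac:(lia)) as Hsum.
  pose proof (avg_iter_rest_le t0 n M) as Hrem.
  apply Rabs_le_between in Hdefect; apply Rabs_le_between in Hsum; apply Rabs_le_between in Hrem.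
  assert ((A - sum_f_R0 (amp p) M) * width n ^ k <= amp p n / 16 * width n ^ k)
    by (apply Rmult_le_compat_r; lra).
  apply (Rmult_le_reg_r (width n ^ k)); nra.
Qed.

End Lacunary_test.

(** * Nowhere differentiability and nowhere Lipschitz continuity *)

Lemma Rpower_INR_S_vanish C d c : 0 < C -> 0 < d -> 0 < c ->
  exists N, forall n, (N <= n)%nat -> C * Rpower (INR (S n)) (- d) < c.
Proof.
  intros HC Hd Hc.
  destruct (INR_archimed 1 (exp (- ln (c / C) / d)) ltac:(lra)) as [N HN].
  exists N; intros n Hn.
  assert (HNn : INR N <= INR (S n)) by (apply le_INR; lia).
  assert (Hln : - ln (c / C) / d < ln (INR (S n))).
  { rewrite <- (ln_exp (- ln (c / C) / d)); apply ln_increasing; [apply exp_pos | lra]. }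
  assert (Hpow : Rpower (INR (S n)) (- d) < c / C).
  { unfold Rpower; rewrite <- (exp_ln (c / C)) by (apply Rdiv_lt_0_compat; lra).
    apply exp_increasing, (Rmult_lt_reg_r (/ d)); [apply Rinv_0_lt_compat, Hd|].
    replace (- d * ln (INR (S n)) * / d) with (- ln (INR (S n))) by (field; lra).
    unfold Rdiv in Hln; lra. }
  apply (Rmult_lt_reg_r (/ C)); [apply Rinv_0_lt_compat, HC|].
  replace (C * Rpower (INR (S n)) (- d) * / C) with (Rpower (INR (S n)) (- d)) by (field; lra).
  exact Hpow.
Qed.

Section Wave_sum.

Variables (p q th A : R) (g : R -> R).
Hypothesis hp : 1 < p.
Hypothesis hq : p + 1 <= q.
Hypothesis hA : infinite_sum (amp p) A.
Hypothesis hg : forall t, infinite_sum (wave p q th t) (g t).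

Lemma wave_sum_defect_ge : exists C, 0 < C /\ forall n t0 l E, 0 <= E ->
  (forall s, 0 <= s <= C * Rpower (INR (S n)) (1 - q) ->
     Rabs (g (t0 + s) - g t0 - l * s) <= E * s) ->
  3 / 8 <= E * C * Rpower (INR (S n)) (1 + p - q).
Proof.
  destruct (INR_archimed 1 (p + 2) ltac:(lra)) as [k Hk].
  destruct (INR_archimed 1 (64 * Rpower 2 p) ltac:(lra)) as [K0 HK0].
  rewrite Rmult_1_r in Hk, HK0.
  set (C := INR k * (2 * PI * INR K0)); exists C.
  assert (HK1 : 1 <= INR K0) by (apply (K0_ge1 p K0); lra).
  pose proof PI_gt3.
  split; [unfold C; apply Rmult_lt_0_compat; [|apply Rmult_lt_0_compat]; lra|].
  intros n t0 l E HE Hdef.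
  pose proof (INR_S_ge1 n) as Hn.
  assert (Hw : INR k * width q K0 n = C * Rpower (INR (S n)) (1 - q)).
  { unfold C, width, freq; unfold Rminus; rewrite Rpower_plus, Rpower_1, Rpower_Ropp by lra.
    pose proof (Rpower_pos (INR (S n)) q); field; lra. }
  rewrite <- Hw in Hdef.
  pose proof (lacunary_test p q th A g k K0 hp hq ltac:(lra) ltac:(lra) hA hg n t0 l E HE Hdef)
    as Htest.
  rewrite Hw in Htest; unfold amp in Htest.
  replace (1 + p - q) with ((1 - q) + p) by ring; rewrite Rpower_plus.
  rewrite Rpower_Ropp in Htest.
  set (x := Rpower (INR (S n)) p) in *; set (y := Rpower (INR (S n)) (1 - q)) in *.
  assert (Hx : 0 < x) by apply Rpower_pos.
  replace (3 / 8) with (3 / 8 * / x * x) by (field; lra).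
  replace (E * C * (y * x)) with (E * (C * y) * x) by ring.
  apply Rmult_le_compat_r; lra.
Qed.

Lemma wave_sum_not_derivable t0 : ~ (exists l, derivable_pt_lim g t0 l).
Proof.
  intros [l Hl].
  destruct wave_sum_defect_ge as [C [HC Hdefect]].
  set (E := 3 / (16 * C)).
  destruct (Hl E ltac:(unfold E; apply Rdiv_lt_0_compat; lra)) as [[d Hd] Hdl]; cbn in Hdl.
  destruct (Rpower_INR_S_vanish C (q - 1) d HC ltac:(lra) Hd) as [n Hn].
  specialize (Hn n (le_n n)); replace (- (q - 1)) with (1 - q) in Hn by ring.
  assert (H38 : 3 / 8 <= E * C * Rpower (INR (S n)) (1 + p - q)).
  { apply (Hdefect n t0 l E); [unfold E; left; apply Rdiv_lt_0_compat; lra|].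
    intros s Hs; destruct (Req_dec s 0) as [->|Hs0].
    - rewrite Rplus_0_r; replace (g t0 - g t0 - l * 0) with 0 by ring; rewrite Rabs_R0; lra.
    - specialize (Hdl s Hs0 ltac:(rewrite Rabs_pos_eq; lra)).
      replace (g (t0 + s) - g t0 - l * s) with (s * ((g (t0 + s) - g t0) / s - l)) by (field; auto).
      rewrite Rabs_mult, (Rabs_pos_eq s), Rmult_comm by lra.
      apply Rmult_le_compat_r; lra. }
  assert (Rpower (INR (S n)) (1 + p - q) <= 1).
  { replace 1 with (Rpower (INR (S n)) 0) at 2
      by (apply Rpower_O; pose proof (INR_S_ge1 n); lra).
    apply Rle_Rpower; [apply INR_S_ge1 | lra]. }
  assert (E * C = 3 / 16) by (unfold E; field; lra).
  assert (0 <= E * C) by lra.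
  nra.
Qed.

Lemma wave_sum_not_lipschitz t0 : p + 1 < q -> ~ lipschitz_at g t0.
Proof.
  intros Hq' [L [eta [HL [Heta HLip]]]].
  destruct wave_sum_defect_ge as [C [HC Hdefect]].
  destruct (Rpower_INR_S_vanish C (q - 1) eta HC ltac:(lra) Heta) as [N1 HN1].
  destruct (Rpower_INR_S_vanish (L * C) (q - 1 - p) (3 / 8) ltac:(nra) ltac:(lra) ltac:(lra))
    as [N2 HN2].
  set (n := Nat.max N1 N2).
  specialize (HN1 n ltac:(lia)); replace (- (q - 1)) with (1 - q) in HN1 by ring.
  specialize (HN2 n ltac:(lia)); replace (- (q - 1 - p)) with (1 + p - q) in HN2 by ring.
  enough (3 / 8 <= L * C * Rpower (INR (S n)) (1 + p - q)) by lra.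
  apply (Hdefect n t0 0 L ltac:(lra)); intros s Hs.
  rewrite Rmult_0_l, Rminus_0_r.
  replace s with (Rabs (t0 + s - t0)) at 2 by (rewrite Rabs_pos_eq; lra).
  apply HLip; lra.
Qed.

End Wave_sum.

Lemma cmod_le_Rabs_add x y : cmod x y <= Rabs x + Rabs y.
Proof.
  unfold cmod; rewrite <- (sqrt_Rsqr (Rabs x + Rabs y))
    by (pose proof (Rabs_pos x); pose proof (Rabs_pos y); lra).
  apply sqrt_le_1_alt; pose proof (Rsqr_abs x); pose proof (Rsqr_abs y); unfold Rsqr in *.
  pose proof (Rabs_pos x); pose proof (Rabs_pos y); nra.
Qed.

Lemma Rabs_le_cmod x y : Rabs x <= cmod x y.
Proof. unfold cmod; rewrite <- sqrt_Rsqr_abs; apply sqrt_le_1_alt; unfold Rsqr; nra. Qed.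

Lemma ccontinuity_pt_of_continuity gr gi t :
  continuity gr -> continuity gi -> ccontinuity_pt gr gi t.
Proof.
  intros Hr Hi e He.
  destruct (Hr t (e / 2) ltac:(lra)) as [d1 [Hd1 K1]].
  destruct (Hi t (e / 2) ltac:(lra)) as [d2 [Hd2 K2]].
  exists (Rmin d1 d2); split; [apply Rmin_glb_lt; auto|]; intros y Hy.
  eapply Rle_lt_trans; [apply cmod_le_Rabs_add|].
  destruct (Req_dec y t) as [->|Hne]; [rewrite !Rminus_diag, Rabs_R0; lra|].
  assert (Rabs (y - t) < d1) by (eapply Rlt_le_trans; [exact Hy|apply Rmin_l]).
  assert (Rabs (y - t) < d2) by (eapply Rlt_le_trans; [exact Hy|apply Rmin_r]).
  specialize (K1 y (conj (conj I (not_eq_sym Hne)) H)).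
  specialize (K2 y (conj (conj I (not_eq_sym Hne)) H0)).
  cbn in K1, K2; unfold R_dist in K1, K2; lra.
Qed.

Lemma cderivable_pt_re gr gi t : cderivable_pt gr gi t -> exists l, derivable_pt_lim gr t l.
Proof.
  intros [lr [li H]]; exists lr; intros e He.
  destruct (H e He) as [d [Hd K]]; exists (mkposreal d Hd); intros h Hh0 Hh.
  eapply Rle_lt_trans; [apply Rabs_le_cmod|]; apply K; auto.
Qed.

Lemma clipschitz_at_re gr gi t : clipschitz_at gr gi t -> lipschitz_at gr t.
Proof.
  intros [L [eta [HL [Heta H]]]]; exists L, eta; repeat split; auto.
  intros y Hy; eapply Rle_trans; [apply Rabs_le_cmod|]; apply H, Hy.
Qed.

Theorem mainTheorem8 (p q : R) (Fre Fim : R -> R)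
  (hp : 1 < p) (hq : p + 1 <= q)
  (hFre : forall t, infinite_sum (term_re p q t) (Fre t))
  (hFim : forall t, infinite_sum (term_im p q t) (Fim t)) :
  ((forall t, ccontinuity_pt Fre Fim t) /\ continuity Fre /\ continuity Fim /\
   (forall t, ~ cderivable_pt Fre Fim t) /\
   (forall t, ~ (exists l, derivable_pt_lim Fre t l)) /\ (forall t, ~ (exists l, derivable_pt_lim Fim t l))) /\
  (p + 1 < q ->
   (forall t, ~ clipschitz_at Fre Fim t) /\
   (forall t, ~ lipschitz_at Fre t) /\ (forall t, ~ lipschitz_at Fim t)).
Proof.
  assert (hA : infinite_sum (amp p) (Fre 0)).
  { apply is_series_Reals, (is_series_ext (term_re p q 0)), is_series_Reals, hFre.
    intros j; unfold term_re, amp; rewrite Rmult_0_l, cos_0; apply Rmult_1_r. }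
  assert (hR : forall t, infinite_sum (wave p q 0 t) (Fre t)).
  { intros t; apply is_series_Reals, (is_series_ext (term_re p q t)), is_series_Reals, hFre.
    intros j; unfold term_re, wave, amp, freq; rewrite Rplus_0_r; reflexivity. }
  assert (hI : forall t, infinite_sum (wave p q (- (PI / 2)) t) (Fim t)).
  { intros t; apply is_series_Reals, (is_series_ext (term_im p q t)), is_series_Reals, hFim.
    intros j; unfold term_im, wave, amp, freq.
    rewrite cos_plus, cos_neg, sin_neg, cos_PI2, sin_PI2; lra. }
  pose proof (continuity_wave_sum p q 0 (Fre 0) Fre hA hR) as HRc.
  pose proof (continuity_wave_sum p q _ (Fre 0) Fim hA hI) as HIc.
  pose proof (wave_sum_not_derivable p q 0 (Fre 0) Fre hp hq hA hR) as HRd.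
  pose proof (wave_sum_not_derivable p q _ (Fre 0) Fim hp hq hA hI) as HId.
  pose proof (wave_sum_not_lipschitz p q 0 (Fre 0) Fre hp hq hA hR) as HRl.
  pose proof (wave_sum_not_lipschitz p q _ (Fre 0) Fim hp hq hA hI) as HIl.
  split; [repeat split | intros hq'; repeat split]; intros t.
  - apply ccontinuity_pt_of_continuity; assumption.
  - exact (HRc t).
  - exact (HIc t).
  - intros Hd; exact (HRd t (cderivable_pt_re _ _ _ Hd)).
  - exact (HRd t).
  - exact (HId t).
  - intros Hl; exact (HRl t hq' (clipschitz_at_re _ _ _ Hl)).
  - exact (HRl t hq').
  - exact (HIl t hq').
Qed.
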